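(* Let $S$ be a sign string of length $n$ and $J$ a state string such that $(S,J)$ is a dominant lattice path, and let $w^S_J\in\mathrm{Inv}(V^S)$ be the value of the web produced by the growth algorithm from $(S,J)$. Then $$w^S_J=e^S_J+\sum_{J'<J}c(S,J,J')\,e^S_{J'}$$ for some coefficients $c(S,J,J')\in\mathbb{N}[v,v^{-1}]$ (polynomials in $v^{\pm1}$ with nonnegative integer coefficients), where state strings are ordered lexicographically (with $-1<0<1$).
   Context: Let $v$ be an indeterminate, $q^{1/2}=-v$, ground field $\mathbb{C}(v)$. $V^+$ and $V^-$ are the 3-dimensional representations of $U_q(\mathfrak{sl}(3))$ (tensor products via $\bar\Delta(E_i)=E_i\otimes1+K_i^{-1}\otimes E_i$, $\bar\Delta(F_i)=F_i\otimes K_i+1\otimes F_i$, $\bar\Delta(K_i)=K_i\otimes K_i$) with bases $e^\pm_1,e^\pm_0,e^\pm_{-1}$: on $V^+$, $E_1e^+_0=e^+_1$, $F_1e^+_1=e^+_0$, $E_2e^+_{-1}=e^+_0$, $F_2e^+_0=e^+_{-1}$, $K_1=\mathrm{diag}(q^{1/2},q^{-1/2},1)$, $K_2=\mathrm{diag}(1,q^{1/2},q^{-1/2})$ on $(e^+_1,e^+_0,e^+_{-1})$; on $V^-$, $E_1e^-_{-1}=e^-_0$, $F_1e^-_0=e^-_{-1}$, $E_2e^-_0=e^-_1$, $F_2e^-_1=e^-_0$, $K_1=\mathrm{diag}(1,q^{1/2},q^{-1/2})$, $K_2=\mathrm{diag}(q^{1/2},q^{-1/2},1)$ on $(e^-_1,e^-_0,e^-_{-1})$;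 other $E_i,F_i$ on basis vectors are $0$. For $S=(s_1,\dots,s_n)\in\{+,-\}^n$ and $J\in\{-1,0,1\}^n$: $V^S=V^{s_1}\otimes\cdots\otimes V^{s_n}$, $e^S_J=e^{s_1}_{j_1}\otimes\cdots\otimes e^{s_n}_{j_n}$. Dominance: with $\mu^\pm$ fundamental weights, $\alpha_i$ simple roots, $\mathrm{wt}(e^+_1)=\mu^+$, $\mathrm{wt}(e^+_0)=\mu^+-\alpha_1$, $\mathrm{wt}(e^+_{-1})=\mu^+-\alpha_1-\alpha_2$, $\mathrm{wt}(e^-_1)=\mu^-$, $\mathrm{wt}(e^-_0)=\mu^--\alpha_2$, $\mathrm{wt}(e^-_{-1})=\mu^--\alpha_1-\alpha_2$; $(S,J)$ is dominant if the partial sums $\pi_k=\sum_{\ell\le k}\mathrm{wt}(e^{s_\ell}_{j_\ell})$ are nonnegative integral combinations of $\mu^+,\mu^-$ and $\pi_n=0$. Elementary tensors: $b^{+-}=e^+_1\otimes e^-_{-1}+v^{-1}e^+_0\otimes e^-_0+v^{-2}e^+_{-1}\otimes e^-_1$, $b^{-+}$ likewise with signs swapped; $t^{---}=e^-_1\otimes e^-_0\otimes e^-_{-1}+v^{-1}e^-_0\otimes e^-_1\otimes e^-_{-1}+v^{-1}e^-_1\otimes e^-_{-1}\otimes e^-_0+v^{-2}e^-_0\otimes e^-_{-1}\otimes e^-_1+v^{-2}e^-_{-1}\otimes e^-_1\otimes e^-_0+v^{-3}e^-_{-1}\otimes e^-_0\otimes e^-_1$, $t^{+++}$ likewise with $+$;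 $\sigma_{\pm\mp}(e^\pm_{-1}\otimes e^\mp_1)=1$, $\sigma_{\pm\mp}(e^\pm_0\otimes e^\mp_0)=v$, $\sigma_{\pm\mp}(e^\pm_1\otimes e^\mp_{-1})=v^2$, other pairs $0$. Webs and values: a web with boundary $S$ is an oriented graph in the closed lower half-plane with endpoints $1..n$ on $y=0$ left to right, other vertices trivalent sources or sinks, edge at endpoint $k$ pointing toward it iff $s_k=+$. Its value is computed after isotoping so each trivalent vertex has all edges leaving upward, by reading horizontal slices bottom to top (strands labeled $+$ if pointing up, $-$ if down): a cup with legs $(a,b)$ inserts $b^{ab}$, a vertex inserts $t^{+++}$ or $t^{---}$, a cap with legs $(a,b)$ applies $\sigma_{ab}$; this is isotopy invariant. Growth algorithm: starting from $n$ parallel strands with strings $(S,J)$, repeatedly apply to adjacent positions with signs $(s,s')$ and states $(j,j')$ one of: if $s'\ne s$ and $(j,j')\in\{(1,0),(0,0),(0,-1)\}$, attach an ''H'' (two trivalent vertices joined by a horizontal edge, each joined to its strand above and a new strand below), new signs $(s',s)$, new states $(0,1),(-1,1),(-1,0)$ respectively; if $s'\ne s$ and $(j,j')=(1,-1)$, join by a cup and delete both positions; if $s'=s$ and $(j,j')\in\{(1,0),(0,-1),(1,-1)\}$, join at a trivalent vertex whose third edge continues downward as one position of opposite sign with state $1,-1,0$ respectively. For dominant $(S,J)$ the algorithm ends with empty strings, producing a web with boundary $S$. *)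

From HB Require Import structures.
From mathcomp Require Import all_boot all_order all_algebra.
Set Implicit Arguments. Unset Strict Implicit. Unset Printing Implicit Defensive.
Import Order.TTheory GRing.Theory Num.Theory.
Local Open Scope ring_scope.

(* Signs: true = "+", false = "-".  States: the integers -1, 0, 1. *)
Definition is_state (j : int) : bool := [|| j == -1, j == 0 | j == 1].

(* weights are written in the basis (mu^+, mu^-) of fundamental weights *)
Definition wadd (x y : int * int) : int * int := (x.1 + y.1, x.2 + y.2).
Definition wsub (x y : int * int) : int * int := (x.1 - y.1, x.2 - y.2).
Definition mu_p : int * int := (1, 0).
Definition mu_m : int * int := (0, 1).
Definition alpha1 : int * int := wsub (wadd mu_p mu_p) mu_m.
Definition alpha2 : int * int := wsub (wadd mu_m mu_m) mu_p.

Definition wt (s : bool) (j : int) : int * int :=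
  if s then
    (if j == 1 then mu_p
     else if j == 0 then wsub mu_p alpha1
     else wsub (wsub mu_p alpha1) alpha2)
  else
    (if j == 1 then mu_m
     else if j == 0 then wsub mu_m alpha2
     else wsub (wsub mu_m alpha1) alpha2).

Definition partial_wt (S : seq bool) (J : seq int) (k : nat) : int * int :=
  foldr wadd (0, 0) (take k [seq wt sj.1 sj.2 | sj <- zip S J]).

Definition dominant (S : seq bool) (J : seq int) : Prop :=
  [/\ size J = size S, all is_state J,
      (forall k, (k <= size S)%N ->
         0 <= (partial_wt S J k).1 /\ 0 <= (partial_wt S J k).2)
    & partial_wt S J (size S) = (0, 0)].

Fixpoint lexlt (a b : seq int) : bool :=
  match a, b with
  | x :: a', y :: b' => (x < y) || ((x == y) && lexlt a' b')
  | _, _ => false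
  end.

Fixpoint all_strings (n : nat) : seq (seq int) :=
  match n with
  | 0 => [:: [::]]
  | n'.+1 => [seq j :: J | j <- [:: 1; 0; -1], J <- all_strings n']
  end.

Section Values.
Variable C : numClosedFieldType.

Definition F : Type := {fraction {poly C}}.
Definition v : F := @FracField.tofrac {poly C} 'X.

(* an element of V^S (|S| = n) is given by its coordinates x J on the basis
   e^S_J, J a state string of length n *)
Definition vec : Type := seq int -> F.

(* the unit of V^{empty} = C(v) *)
Definition vec_one : vec := fun J => if J == [::] then 1 else 0.

(* elementary tensors (coordinates); the sign arguments only record which of
   b^{+-}, b^{-+} (resp. t^{+++}, t^{---}, sigma_{+-}, sigma_{-+}) is meant:
   the coordinates are the same in both cases *)
Definition btens (a b : bool) : vec := fun J =>
  match J with
  | [:: x; y] =>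
      if (x == 1) && (y == -1) then 1
      else if (x == 0) && (y == 0) then v^-1
      else if (x == -1) && (y == 1) then v ^- 2
      else 0
  | _ => 0
  end.

Definition ttens (s : bool) : vec := fun J =>
  if J == [:: 1; 0; -1] then 1
  else if J == [:: 0; 1; -1] then v^-1
  else if J == [:: 1; -1; 0] then v^-1
  else if J == [:: 0; -1; 1] then v ^- 2
  else if J == [:: -1; 1; 0] then v ^- 2
  else if J == [:: -1; 0; 1] then v ^- 3
  else 0.

Definition sigma (a b : bool) : vec := fun J =>
  match J with
  | [:: x; y] =>
      if (x == -1) && (y == 1) then 1
      else if (x == 0) && (y == 0) then v
      else if (x == 1) && (y == -1) then v ^+ 2
      else 0
  | _ => 0
  end.

(* slice operations (reading bottom to top):
   [ins k x r w] inserts the r-strand tensor x just before strand k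
   (a cup, r = 2, or a vertex, r = 3);
   [cap k f w] joins strands k and k+1 by a cap applying the form f. *)
Definition ins (k : nat) (x : vec) (r : nat) (w : vec) : vec := fun J =>
  x (take r (drop k J)) * w (take k J ++ drop (k + r) J).

Definition cap (k : nat) (f : vec) (w : vec) : vec := fun J =>
  \sum_(m <- all_strings 2) f m * w (take k J ++ m ++ drop k J).

(* the three kinds of pieces attached by the growth algorithm at strands
   k, k+1, isotoped so that every trivalent vertex has its edges leaving
   upward, then read slice by slice from the bottom *)

Definition cup_piece (k : nat) (s : bool) (w : vec) : vec :=
  ins k (btens s (~~ s)) 2 w.

(* Y: strands k, k+1 of sign s meet at a vertex whose third edge goes down
   as strand k (sign ~~s); that edge is bent up on the left by a cap *)
Definition Y_piece (k : nat) (s : bool) (w : vec) : vec :=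
  cap k (sigma (~~ s) s) (ins k.+1 (ttens s) 3 w).

Definition H_piece (k : nat) (s : bool) (w : vec) : vec :=
  let w1 := ins k.+1 (ttens s) 3 w in          (* x x' p h y    *)
  let w2 := cap k (sigma (~~ s) s) w1 in       (* p h y         *)
  let w3 := ins k.+2 (ttens (~~ s)) 3 w2 in    (* p h e1 e2 e3 y *)
  let w4 := cap k.+1 (sigma s (~~ s)) w3 in    (* p e2 e3 y     *)
  cap k.+2 (sigma (~~ s) s) w4.                (* p e2          *)

Definition H_rule (j j' : int) : option (int * int) :=
  if (j == 1) && (j' == 0) then Some (0, 1)
  else if (j == 0) && (j' == 0) then Some (-1, 1)
  else if (j == 0) && (j' == -1) then Some (-1, 0)
  else None.

Definition Y_rule (j j' : int) : option int :=
  if (j == 1) && (j' == 0) then Some 1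
  else if (j == 0) && (j' == -1) then Some (-1)
  else if (j == 1) && (j' == -1) then Some 0
  else None.

(* [grows SJ w]: some run of the growth algorithm started from the strings
   SJ (pairs (sign, state)) ends with empty strings, and w is the value of
   the web it produces. *)
Inductive grows : seq (bool * int) -> vec -> Prop :=
| grows_nil : grows [::] vec_one
| grows_H (L R : seq (bool * int)) (s : bool) (j j' a b : int) (w : vec) :
    H_rule j j' = Some (a, b) ->
    grows (L ++ [:: (~~ s, a); (s, b)] ++ R) w ->
    grows (L ++ [:: (s, j); (~~ s, j')] ++ R) (H_piece (size L) s w)
| grows_cup (L R : seq (bool * int)) (s : bool) (w : vec) :
    grows (L ++ R) w ->
    grows (L ++ [:: (s, 1); (~~ s, -1)] ++ R) (cup_piece (size L) s w)
| grows_Y (L R : seq (bool * int)) (s : bool) (j j' m : int) (w : vec) :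
    Y_rule j j' = Some m ->
    grows (L ++ [:: (~~ s, m)] ++ R) w ->
    grows (L ++ [:: (s, j); (s, j')] ++ R) (Y_piece (size L) s w).

Definition nlaurent (x : F) : Prop :=
  exists (k : nat) (cs : seq nat),
    x = (\sum_(i < size cs) (nth 0%N cs i)%:R * v ^+ i) * v ^- k.

End Values.

(* Each piece attached by the growth algorithm acts on the strands it grows from
   by a local kernel: the value of the larger web at a state string [p ++ u ++ t]
   is a sum over lower states [x] of coefficients times the value of the smaller
   web at [p ++ x ++ t], and every coefficient is [0] or a power of [v].  For the
   upper states allowed by a growth rule the kernel is unitriangular for the
   lexicographic order: upper states [u >= (j, j')] only reach lower states beyond
   the output of the rule, except [u = (j, j')] itself, which reaches that output
   with total coefficient [1].  As the lexicographic order is compatible with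
   concatenation, the shape "[e_J] plus lower terms with coefficients in
   [N[v, v^-1]]" propagates along the growth, starting from the empty web. *)
From HB Require Import structures.
From mathcomp Require Import all_boot all_order all_algebra zify.
Import Order.TTheory GRing.Theory Num.Theory.
Local Open Scope ring_scope.

Lemma lexlt_irr (a : seq int) : lexlt a a = false.
Proof. by elim: a => //= x a ->; rewrite ltxx andbF. Qed.

Lemma lexlt_eqF {a b : seq int} : lexlt a b -> (b == a) = false.
Proof. by apply: contraTF => /eqP->; rewrite lexlt_irr. Qed.

Lemma lexlt_cat (p p' a b : seq int) : size p = size p' ->
  lexlt (p ++ a) (p' ++ b) = lexlt p p' || (p == p') && lexlt a b.
Proof.
elim: p p' => [|x p IH] [|y p'] //= [/IH ->].
by rewrite eqseq_cons; case: (x < y); case: (x == y); case: (lexlt p p'); case: (p == p').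
Qed.

Lemma lexlt_total {a b : seq int} : size a = size b -> a != b ->
  lexlt a b || lexlt b a.
Proof.
elim: a b => [|x a IH] [|y b] //= [/IH IHb].
by rewrite eqseq_cons negb_and; case: ltgtP => //= ->; rewrite eqxx.
Qed.

Definition lexle (a b : seq int) : bool := (a == b) || lexlt a b.

Lemma lexle_cat (p p' a b : seq int) : size p = size p' ->
  lexle (p ++ a) (p' ++ b) = lexlt p p' || (p == p') && lexle a b.
Proof.
move=> hp; rewrite /lexle lexlt_cat // eqseq_cat //.
by case: (p == p'); case: (lexlt p p'); rewrite ?orbT.
Qed.

Definition states : seq int := [:: 1; 0; -1].

Lemma mem_states j : (j \in states) = is_state j.
Proof. by rewrite !inE /is_state; case: (j == 1); case: (j == 0); rewrite ?orbT ?orbF. Qed.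

Lemma mem_all_strings n K : (K \in all_strings n) = (size K == n) && all is_state K.
Proof.
elim: n K => [|n IH] K; first by case: K.
apply/allpairsPdep/idP => [[j [K' [hj hK ->]]]|].
  by move: hK; rewrite IH /= eqSS -mem_states hj => /andP[-> ->].
case: K => [|j K] //=; rewrite eqSS -mem_states => /and3P[hK hj hKs].
by exists j, K; rewrite IH hK.
Qed.

Lemma size_all_strings {n K} : K \in all_strings n -> size K = n.
Proof. by rewrite mem_all_strings => /andP[/eqP]. Qed.

Lemma all_strings_cat m n p t :
  p \in all_strings m -> t \in all_strings n -> p ++ t \in all_strings (m + n).
Proof.
rewrite !mem_all_strings size_cat all_cat.
by move=> /andP[/eqP-> ->] /andP[/eqP-> ->]; rewrite eqxx.
Qed.

Lemma all_strings_catP m n K : K \in all_strings (m + n) ->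
  exists p t, [/\ K = p ++ t, p \in all_strings m & t \in all_strings n].
Proof.
rewrite mem_all_strings -{2}(cat_take_drop m K) all_cat => /and3P[/eqP hK hp ht].
exists (take m K), (drop m K); rewrite cat_take_drop !mem_all_strings hp ht.
by rewrite size_takel ?size_drop hK ?addKn ?leq_addr ?eqxx.
Qed.

(* Coefficients [0] or [v ^ n] are encoded by their exponent, [None] standing
   for [0]; the products of such coefficients are then computable. *)
Definition expD (a b : option int) : option int :=
  obind (fun m => omap (fun n => m + n) b) a.

Definition sigma_exp (m : seq int) : option int :=
  match m with
  | [:: x; y] =>
      if (x == -1) && (y == 1) then Some 0
      else if (x == 0) && (y == 0) then Some 1
      else if (x == 1) && (y == -1) then Some 2
      else None
  | _ => None
  end.

Definition btens_exp (m : seq int) : option int :=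
  match m with
  | [:: x; y] =>
      if (x == 1) && (y == -1) then Some 0
      else if (x == 0) && (y == 0) then Some (-1)
      else if (x == -1) && (y == 1) then Some (-2)
      else None
  | _ => None
  end.

Definition ttens_exp (m : seq int) : option int :=
  if m == [:: 1; 0; -1] then Some 0
  else if m == [:: 0; 1; -1] then Some (-1)
  else if m == [:: 1; -1; 0] then Some (-1)
  else if m == [:: 0; -1; 1] then Some (-2)
  else if m == [:: -1; 1; 0] then Some (-2)
  else if m == [:: -1; 0; 1] then Some (-3)
  else None.

(* The last clause says that the coefficients of [e_x0] in the image of [e_u0]
   are nonzero for exactly one index, where the coefficient is [v ^ 0]. *)
Definition kernel_unitriangular {T : eqType} (idx : seq T)
    (e : seq int -> T -> option int) (xof : T -> seq int) (u0 x0 : seq int) : bool :=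
  [&& all (fun i => xof i \in all_strings (size x0)) idx,
      all (fun u => lexle u0 u ==> all (fun i =>
             [|| e u i == None, lexlt x0 (xof i) | (u == u0) && (xof i == x0)]) idx)
        (all_strings (size u0))
    & pmap id [seq e u0 i | i <- idx & xof i == x0] == [:: 0]].

Definition cup_exp (u : seq int) (_ : unit) : option int := btens_exp u.

Lemma cup_unitriangular :
  kernel_unitriangular [:: tt] cup_exp (fun _ => [::]) [:: 1; -1] [::].
Proof. by vm_compute. Qed.

Definition Y_exp (u : seq int) (c : int) : option int :=
  expD (sigma_exp [:: c; -c]) (ttens_exp (-c :: u)).

Lemma Y_rule_unitriangular {j j' m} : Y_rule j j' = Some m ->
  kernel_unitriangular states Y_exp (fun c => [:: c]) [:: j; j'] [:: m].
Proof.
rewrite /Y_rule; case: ifP => [/andP[/eqP-> /eqP->] [<-] | _]; first by vm_compute.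
case: ifP => [/andP[/eqP-> /eqP->] [<-] | _]; first by vm_compute.
by case: ifP => // /andP[/eqP-> /eqP->] [<-]; vm_compute.
Qed.

(* [(c, (n, a))] are the states on the left legs of the three caps of the H,
   from the top one down. *)
Definition H_index : seq (int * (int * int)) :=
  [seq (c, na) | c <- states, na <- [seq (n, a) | n <- states, a <- states]].

Definition H_exp (u : seq int) (i : int * (int * int)) : option int :=
  let: (c, (n, a)) := i in
  if u is [:: u1; u2] then
    expD (sigma_exp [:: c; -c]) (expD (sigma_exp [:: n; -n])
      (expD (ttens_exp [:: -n; u2; c])
        (expD (sigma_exp [:: a; -a]) (ttens_exp [:: -a; u1; n]))))
  else None.

Definition H_out (i : int * (int * int)) : seq int :=
  let: (c, (_, a)) := i in [:: a; -c].

Lemma H_rule_unitriangular {j j' a b} : H_rule j j' = Some (a, b) ->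
  kernel_unitriangular H_index H_exp H_out [:: j; j'] [:: a; b].
Proof.
rewrite /H_rule; case: ifP => [/andP[/eqP-> /eqP->] [<- <-] | _]; first by vm_compute.
case: ifP => [/andP[/eqP-> /eqP->] [<- <-] | _]; first by vm_compute.
by case: ifP => // /andP[/eqP-> /eqP->] [<- <-]; vm_compute.
Qed.

Section Webs.
Variable C : numClosedFieldType.
Local Notation F := (F C).
Local Notation v := (v C).
Local Notation vec := (vec C).

Lemma v_neq0 : v != 0.
Proof. by rewrite tofrac_eq0 polyX_eq0. Qed.

Definition vpowsum (x : F) : Prop := exists l : seq int, x = \sum_(n <- l) v ^ n.

Lemma vpowsum0 : vpowsum 0.
Proof. by exists [::]; rewrite big_nil. Qed.

Lemma vpowsum_expz n : vpowsum (v ^ n).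
Proof. by exists [:: n]; rewrite big_seq1. Qed.

Lemma vpowsumD x y : vpowsum x -> vpowsum y -> vpowsum (x + y).
Proof. by move=> [l ->] [l' ->]; exists (l ++ l'); rewrite big_cat. Qed.

Lemma vpowsum_sum (T : eqType) (r : seq T) (G : T -> F) :
  {in r, forall i, vpowsum (G i)} -> vpowsum (\sum_(i <- r) G i).
Proof.
by move=> hG; rewrite big_seq; apply: big_ind => //; [exact: vpowsum0 | exact: vpowsumD].
Qed.

Lemma vpowsum_expzM n x : vpowsum x -> vpowsum (v ^ n * x).
Proof.
move=> [l ->]; exists [seq n + m | m <- l].
by rewrite big_map big_distrr; apply: eq_bigr => m _; rewrite expfzDr ?v_neq0.
Qed.

Definition natpoly (cs : seq nat) : F := \sum_(i < size cs) (nth 0%N cs i)%:R * v ^+ i.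

Lemma natpoly_cons c cs : natpoly (c :: cs) = c%:R + v * natpoly cs.
Proof.
rewrite /natpoly /= big_ord_recl /= expr0 mulr1 big_distrr /=; congr (_ + _).
by apply: eq_bigr => i _; rewrite exprS mulrCA.
Qed.

Lemma natpoly_shift d cs : natpoly (nseq d 0%N ++ cs) = v ^+ d * natpoly cs.
Proof.
elim: d => [|d IH]; first by rewrite mul1r.
by rewrite /= natpoly_cons IH add0r exprS mulrA.
Qed.

Lemma natpoly_incr cs m : natpoly (incr_nth cs m) = natpoly cs + v ^+ m.
Proof.
have natpoly1 : natpoly [:: 1%N] = 1 by rewrite natpoly_cons /natpoly big_ord0 mulr0 addr0.
elim: cs m => [|c cs IH] [|m] /=.
- by rewrite natpoly1 /natpoly big_ord0 add0r.
- have -> : 0%N :: ncons m 0%N [:: 1%N] = nseq m.+1 0%N ++ [:: 1%N] by rewrite cat_nseq.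
  by rewrite natpoly_shift natpoly1 mulr1 /natpoly big_ord0 add0r.
- by rewrite !natpoly_cons -addn1 natrD addrAC.
- by rewrite !natpoly_cons IH mulrDr exprS addrA.
Qed.

Lemma nlaurentD_expz x n : nlaurent x -> nlaurent (x + v ^ n).
Proof.
move=> [k [cs ->]]; rewrite -/(natpoly cs).
(* both summands are brought over the common denominator [v ^+ (k + |n|)] *)
pose d := absz n; pose m := absz (n + (k + d)%N).
have hm : (m : int) = n + (k + d)%N by rewrite gez0_abs /d; lia.
exists (k + d)%N, (incr_nth (nseq d 0%N ++ cs) m).
rewrite -/(natpoly _) natpoly_incr natpoly_shift mulrDl !exprnN !exprnP.
congr (_ + _); last by rewrite -expfzDr ?v_neq0 // hm addrK.
rewrite mulrAC -expfzDr ?v_neq0 // mulrC.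
by rewrite PoszD opprD addrCA subrr addr0.
Qed.

Lemma vpowsum_nlaurent x : vpowsum x -> nlaurent x.
Proof.
move=> [l ->]; elim/last_ind: l => [|l n IH].
  by exists 0%N, [::]; rewrite big_nil big_ord0 mul0r.
by rewrite -cats1 big_cat big_seq1; exact: nlaurentD_expz.
Qed.

Definition vpow (o : option int) : F := oapp (exprz v) 0 o.

Lemma vpowD a b : vpow (expD a b) = vpow a * vpow b.
Proof.
by case: a => [m|]; case: b => [n|] /=; rewrite ?mul0r ?mulr0 // expfzDr ?v_neq0.
Qed.

Lemma vpowsum_vpowM o x : vpowsum x -> vpowsum (vpow o * x).
Proof. by case: o => [n|] hx /=; [exact: vpowsum_expzM | rewrite mul0r; exact: vpowsum0]. Qed.

Lemma sigmaE a b m : sigma C a b m = vpow (sigma_exp m).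
Proof. by case: m => [|x [|y []]] //=; do ![case: ifP => _]; rewrite /= ?expr0z. Qed.

Lemma ttensE s m : ttens C s m = vpow (ttens_exp m).
Proof. by rewrite /ttens /ttens_exp; do ![case: ifP => _]; rewrite /= ?expr0z. Qed.

Lemma btensE a b m : btens C a b m = vpow (btens_exp m).
Proof. by case: m => [|x [|y []]] //=; do ![case: ifP => _]; rewrite /= ?expr0z. Qed.

Definition unitriangular (w : vec) (J : seq int) : Prop :=
  {in all_strings (size J), forall K, vpowsum (w K)} /\
  {in all_strings (size J), forall K, lexle J K -> w K = (K == J)%:R}.

Definition acts_locally {T : eqType} (idx : seq T) (e : seq int -> T -> option int)
    (xof : T -> seq int) (W w : vec) (k r : nat) : Prop :=
  forall p u t, size p = k -> size u = r ->
    W (p ++ u ++ t) = \sum_(i <- idx) vpow (e u i) * w (p ++ xof i ++ t).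

Section LocalKernel.
Variables (T : eqType) (idx : seq T) (e : seq int -> T -> option int) (xof : T -> seq int).
Variables (W w : vec) (p0 u0 s0 x0 : seq int).
Hypotheses (hker : kernel_unitriangular idx e xof u0 x0)
           (hW : acts_locally idx e xof W w (size p0) (size u0))
           (hw : unitriangular w (p0 ++ x0 ++ s0)).

Lemma all_strings_cat3 K : K \in all_strings (size (p0 ++ u0 ++ s0)) -> exists p u t,
  [/\ K = p ++ u ++ t, p \in all_strings (size p0), u \in all_strings (size u0)
    & t \in all_strings (size s0)].
Proof.
rewrite !size_cat => /all_strings_catP[p [ut [-> hp /all_strings_catP[u [t [-> hu ht]]]]]].
by exists p, u, t.
Qed.

Lemma kernel_output_size {i} : i \in idx -> size (xof i) = size x0.
Proof. by case/and3P: hker => /allP hx _ _ /hx /size_all_strings. Qed.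

Lemma kernel_output_strings {p t i} : i \in idx ->
  p \in all_strings (size p0) -> t \in all_strings (size s0) ->
  p ++ xof i ++ t \in all_strings (size (p0 ++ x0 ++ s0)).
Proof.
case/and3P: hker => /allP hx _ _ hi hp ht.
by rewrite !size_cat; apply: all_strings_cat => //; apply: all_strings_cat => //; exact: hx.
Qed.

Lemma kernel_support {u i} : u \in all_strings (size u0) -> lexle u0 u -> i \in idx ->
  [|| e u i == None, lexlt x0 (xof i) | (u == u0) && (xof i == x0)].
Proof. by case/and3P: hker => _ /allP h _ /h /implyP hu /hu /allP; apply. Qed.

Lemma kernel_leading_sum : \sum_(i <- idx | xof i == x0) vpow (e u0 i) = 1.
Proof.
case/and3P: hker => _ _ /eqP hlead.
by rewrite -big_filter -(big_map (e u0) xpredT) -big_pmap hlead big_seq1 expr0z.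
Qed.

Lemma lexlt_vanish L : L \in all_strings (size (p0 ++ x0 ++ s0)) ->
  lexlt (p0 ++ x0 ++ s0) L -> w L = 0.
Proof. by move=> hL hlt; rewrite hw.2 ?(lexlt_eqF hlt) // /lexle hlt orbT. Qed.

Lemma local_vpowsum : {in all_strings (size (p0 ++ u0 ++ s0)), forall K, vpowsum (W K)}.
Proof.
move=> K /all_strings_cat3[p [u [t [-> hp hu ht]]]].
rewrite hW; [|exact: size_all_strings hp|exact: size_all_strings hu].
apply: vpowsum_sum => i hi; apply: vpowsum_vpowM.
by apply: hw.1; exact: kernel_output_strings.
Qed.

Lemma local_upper :
  {in all_strings (size (p0 ++ u0 ++ s0)), forall K, lexle (p0 ++ u0 ++ s0) K ->
    W K = (K == p0 ++ u0 ++ s0)%:R}.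
Proof.
move=> K /all_strings_cat3[p [u [t [-> hp hu ht]]]].
have [[szp szu] szt] := (size_all_strings hp, size_all_strings hu, size_all_strings ht).
rewrite hW // lexle_cat // lexle_cat // !eqseq_cat // ?szu //.
case/orP => [hlt | /andP[/eqP Ep hut]]; last subst p.
  rewrite big1_seq => [|i /andP[_ hi]]; first by rewrite (lexlt_eqF hlt).
  by rewrite lexlt_vanish ?mulr0 ?kernel_output_strings // lexlt_cat // hlt.
have vanish i : i \in idx -> (e u i == None) || lexlt x0 (xof i) ->
    vpow (e u i) * w (p0 ++ xof i ++ t) = 0.
  move=> hi /orP[/eqP-> | hx]; first by rewrite mul0r.
  rewrite lexlt_vanish ?mulr0 ?kernel_output_strings // lexlt_cat // eqxx.
  by rewrite lexlt_cat ?hx ?orbT ?kernel_output_size.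
case/orP: hut => [hlt | /andP[/eqP Eu hst]]; last subst u.
  rewrite big1_seq => [|i /andP[_ hi]]; first by rewrite (lexlt_eqF hlt) andbF.
  apply: vanish => //; have := kernel_support hu _ hi; rewrite /lexle hlt orbT.
  by rewrite (lexlt_eqF hlt) /= orbF; apply.
rewrite !eqxx (eq_big_seq (fun i => (t == s0)%:R * if xof i == x0 then vpow (e u0 i) else 0)).
  by rewrite -big_distrr /= -big_mkcond kernel_leading_sum mulr1.
move=> i hi; have := kernel_support hu _ hi; rewrite /lexle eqxx => /(_ isT).
case/or3P => [hnone | hx | /andP[_ /eqP hxi]].
- by rewrite vanish ?hnone // (eqP hnone) if_same mulr0.
- by rewrite vanish ?hx ?orbT // (lexlt_eqF hx) mulr0.
rewrite hxi eqxx mulrC hw.2.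
- by rewrite !eqseq_cat // !eqxx.
- by rewrite -{1}hxi kernel_output_strings.
by rewrite !lexle_cat // !eqxx !lexlt_irr hst.
Qed.

Lemma unitriangular_local : unitriangular W (p0 ++ u0 ++ s0).
Proof. by split; [exact: local_vpowsum | exact: local_upper]. Qed.

End LocalKernel.

Arguments unitriangular_local {T idx e xof W w p0 u0 s0 x0}.

Lemma ins_cat k x r (X : vec) p m t : size p = k -> size m = r ->
  ins k x r X (p ++ m ++ t) = x m * X (p ++ t).
Proof.
move=> <- <-; rewrite /ins drop_size_cat // take_size_cat // take_size_cat //.
by rewrite catA drop_size_cat ?size_cat.
Qed.

Lemma cap_sigma_at k a b (X : vec) p t : size p = k ->
  cap k (sigma C a b) X (p ++ t) =
  \sum_(c <- states) vpow (sigma_exp [:: c; -c]) * X (p ++ [:: c, -c & t]).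
Proof.
move=> <-; rewrite /cap take_size_cat // drop_size_cat //.
by rewrite /= !big_cons !big_nil /= !mul0r !add0r !addr0.
Qed.

Lemma cup_piece_local k s (w : vec) :
  acts_locally [:: tt] cup_exp (fun _ => [::]) (cup_piece k s w) w k 2.
Proof. by move=> p u t <- hu; rewrite big_seq1 /cup_piece ins_cat // btensE. Qed.

Lemma Y_piece_local k s (w : vec) :
  acts_locally states Y_exp (fun c => [:: c]) (Y_piece k s w) w k 2.
Proof.
move=> p u t <- hu; rewrite /Y_piece cap_sigma_at //; apply: eq_bigr => c _.
rewrite -cat_rcons -[_ :: u ++ t]/((-c :: u) ++ t) ins_cat ?size_rcons /= ?hu //.
by rewrite cat_rcons ttensE mulrA -vpowD.
Qed.

Lemma H_piece_local k s (w : vec) :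
  acts_locally H_index H_exp H_out (H_piece k s w) w k 2.
Proof.
move=> p u t <-; case: u => [|u1 [|u2 []]] // _; rewrite /H_piece.
set w1 := ins _ _ 3 w; set w2 := cap _ _ w1; set w3 := ins _ _ 3 w2; set w4 := cap _ _ w3.
have w2E n c : w2 (p ++ [:: u1, n, -c & t]) = \sum_(a <- states)
    vpow (sigma_exp [:: a; -a]) * (vpow (ttens_exp [:: -a; u1; n]) * w (p ++ [:: a, -c & t])).
  rewrite /w2 cap_sigma_at //; apply: eq_bigr => a _.
  rewrite /w1 -cat_rcons -[_ :: _ :: _ :: _ :: t]/([:: -a; u1; n] ++ -c :: t).
  by rewrite ins_cat ?size_rcons // cat_rcons ttensE.
have w4E c : w4 (rcons p u1 ++ [:: u2, c, -c & t]) = \sum_(n <- states)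
    vpow (sigma_exp [:: n; -n]) *
    (vpow (ttens_exp [:: -n; u2; c]) * w2 (p ++ [:: u1, n, -c & t])).
  rewrite /w4 cap_sigma_at ?size_rcons //; apply: eq_bigr => n _.
  rewrite cat_rcons -[p ++ _]/(p ++ [:: u1; n] ++ [:: -n; u2; c] ++ -c :: t) catA.
  by rewrite /w3 ins_cat ?size_cat ?addn2 // -catA ttensE.
rewrite catA cap_sigma_at ?size_cat ?addn2 // big_allpairs_dep; apply: eq_bigr => c _.
rewrite -catA -[p ++ _]/(p ++ u1 :: [:: u2, c, -c & t]) -cat_rcons w4E.
rewrite big_allpairs_dep big_distrr; apply: eq_bigr => n _.
rewrite w2E !big_distrr; apply: eq_bigr => a _.
by rewrite /= !vpowD !mulrA.
Qed.

Lemma unitriangular_vec_one : unitriangular (vec_one C) [::].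
Proof.
split=> K; rewrite mem_all_strings => /andP[/eqP/size0nil -> _] //.
by rewrite /vec_one /= -(expr0z v); exact: vpowsum_expz.
Qed.

Lemma grows_unitriangular SJ (w : vec) : grows SJ w -> unitriangular w (unzip2 SJ).
Proof.
elim=> [|L R s j j' a b w' hr _ IH|L R s w' _ IH|L R s j j' m w' hr _ IH].
  exact: unitriangular_vec_one.
all: rewrite /unzip2 !map_cat in IH *; rewrite -(size_map snd L).
- exact: unitriangular_local (H_rule_unitriangular hr) (H_piece_local _ _ _) IH.
- exact: unitriangular_local cup_unitriangular (cup_piece_local _ _ _) IH.
- exact: unitriangular_local (Y_rule_unitriangular hr) (Y_piece_local _ _ _) IH.
Qed.

End Webs.

Theorem theorem6 (C : numClosedFieldType) (S : seq bool) (J : seq int)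
    (w : vec C) :
  dominant S J ->
  grows (zip S J) w ->
  exists c : seq int -> F C,
    (forall J' : seq int, size J' = size S -> all is_state J' ->
       lexlt J' J -> nlaurent (c J')) /\
    (forall J' : seq int, size J' = size S -> all is_state J' ->
       w J' = (J' == J)%:R + (if lexlt J' J then c J' else 0)).
Proof.
(* of dominance, only the length and state conditions are needed *)
move=> [hsz hst _ _] /grows_unitriangular[hpos hupper].
rewrite unzip2_zip ?hsz // in hpos hupper.
have memS J' : size J' = size S -> all is_state J' -> J' \in all_strings (size S).
  by rewrite mem_all_strings => -> ->; rewrite eqxx.
exists w; split=> [J' hs hst' _ | J' hs hst']; first exact/vpowsum_nlaurent/hpos/memS.
case: (eqVneq J' J) => [->|hne] /=.
  by rewrite lexlt_irr addr0 hupper ?memS // /lexle eqxx.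
rewrite add0r; case: ifP => // hlt.
have hJJ' : lexlt J J' by move: (lexlt_total (etrans hs (esym hsz)) hne); rewrite hlt.
by rewrite hupper ?memS ?(negbTE hne) // /lexle hJJ' orbT.
Qed.
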